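(* Let $\rho$ be an $m$-qubit density matrix, and let $\eta,\varepsilon\in\mathbb R$ and $b>0$ satisfy $\eta-\varepsilon-\frac1b>0$. Let $\mathcal C$ be a finite set of $m$-qubit pure product states such that (1) $\langle\pi|\rho|\pi\rangle\ge\eta-\varepsilon$ for all $|\pi\rangle\in\mathcal C$, and (2) $d_{\tan}(|\pi\rangle,|\pi'\rangle)\ge b$ for all distinct $|\pi\rangle,|\pi'\rangle\in\mathcal C$. Then $|\mathcal C|\le\frac{1}{\eta-\varepsilon-\frac1b}$.
   Context: For pure product states $|\pi\rangle=\bigotimes_{i=1}^m|\pi_i\rangle$ and $|\pi'\rangle=\bigotimes_{i=1}^m|\pi'_i\rangle$ (each $|\pi_i\rangle,|\pi'_i\rangle\in\mathbb{C}^2$ a unit vector), the tangent distance is $d_{\tan}(|\pi\rangle,|\pi'\rangle)=\Big(\sum_{i=1}^m\frac{1-|\langle\pi_i|\pi'_i\rangle|^2}{|\langle\pi_i|\pi'_i\rangle|^2}\Big)^{1/2}$ (a summand is $+\infty$ if $\langle\pi_i|\pi'_i\rangle=0$); equivalently, for $|\pi_{\vec z}\rangle=\bigotimes_i\frac{|0\rangle+z_i|1\rangle}{\sqrt{1+|z_i|^2}}$ it equals $\big(\sum_i|\frac{z_i-a_i}{1+z_i^*a_i}|^2\big)^{1/2}$. Distinct states are distinct up to global phase. *)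

From HB Require Import structures.
From mathcomp Require Import all_boot all_order all_algebra.
From mathcomp Require Import complex.
From mathcomp Require Import constructive_ereal.
Set Implicit Arguments. Unset Strict Implicit. Unset Printing Implicit Defensive.
Import Order.TTheory GRing.Theory Num.Theory.
Local Open Scope ring_scope.

Section QDefs.
Variable R : rcfType.
Local Notation C := R[i].

Definition csqnorm (x : C) : R := (complex.Re x) ^+ 2 + (complex.Im x) ^+ 2.

Definition cinner (n : nat) (u v : 'cV[C]_n) : C :=
  \sum_(k < n) conjc (u k 0) * v k 0.

Definition adjmx (n p : nat) (A : 'M[C]_(n, p)) : 'M[C]_(p, n) :=
  \matrix_(i, j) conjc (A j i).

Definition density_matrix (n : nat) (rho : 'M[C]_n) : Prop :=
  [/\ adjmx rho = rho,
      (forall v : 'cV[C]_n, 0 <= cinner v (rho *m v)) &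
      \tr rho = 1].

Definition unit_vector (n : nat) (v : 'cV[C]_n) : Prop := cinner v v = 1.

(* a description of an m-qubit pure product state by its m single-qubit factors *)
Definition prod_factors (m : nat) := 'I_m -> 'cV[C]_2.

(* i-th bit of the computational-basis index j; qubit i is bit i of j *)
Definition qbit (m : nat) (j : 'I_(2 ^ m)) (i : 'I_m) : 'I_2 :=
  inord (odd (j %/ 2 ^ i)).

(* the tensor product |pi_1> (x) ... (x) |pi_m> in C^(2^m) *)
Definition prod_state (m : nat) (p : prod_factors m) : 'cV[C]_(2 ^ m) :=
  \col_(j < 2 ^ m) \prod_(i < m) p i (qbit j i) 0.

Definition expect (n : nat) (rho : 'M[C]_n) (v : 'cV[C]_n) : C :=
  cinner v (rho *m v).

Definition dtan (m : nat) (p q : prod_factors m) : \bar R :=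
  if [exists i : 'I_m, cinner (p i) (q i) == 0] then +oo%E
  else (Num.sqrt (\sum_(i < m)
          (1 - csqnorm (cinner (p i) (q i))) / csqnorm (cinner (p i) (q i))))%:E.

End QDefs.

(* Each |<pi|pi'>|^2 factorises into the single-qubit overlaps x_i in (0, 1], and
   prod x_i * (1 + sum (1 - x_i) / x_i) <= 1, so a tangent distance >= b forces
   |<pi|pi'>| <= 1/b.  Unit vectors v_1, ..., v_n with pairwise overlaps <= c
   have sum_k |<v_k|u>|^2 <= 1 + n c for every unit u (Cauchy-Schwarz against
   w = sum_k <v_k|u> v_k), hence sum_k <v_k|rho|v_k> <= 1 + n c by the spectral
   theorem.  With c = 1/b this gives n (eta - eps) <= 1 + n/b. *)
From HB Require Import structures.
From mathcomp Require Import all_boot all_order all_algebra.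
From mathcomp Require Import complex.
From mathcomp Require Import constructive_ereal.
From mathcomp Require Import ring lra.
Set Implicit Arguments. Unset Strict Implicit. Unset Printing Implicit Defensive.
Import Order.TTheory GRing.Theory Num.Theory.
Local Open Scope ring_scope.

Lemma odd_divn_exp2_inj (m j j' : nat) : (j < 2 ^ m)%N -> (j' < 2 ^ m)%N ->
  (forall i, (i < m)%N -> odd (j %/ 2 ^ i) = odd (j' %/ 2 ^ i)) -> j = j'.
Proof.
elim: m j j' => [|m IHm] j j'; first by rewrite expn0 !ltnS !leqn0 => /eqP-> /eqP->.
move=> ltj ltj' eq_bits.
have eq_half : j./2 = j'./2.
  apply: IHm; try by rewrite -divn2 ltn_divLR // -expnSr.
  by move=> i lt_im; rewrite -!divn2 -!divnMA -expnS; apply: eq_bits.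
have := eq_bits 0%N isT; rewrite expn0 !divn1 => eq_odd.
by rewrite -(odd_double_half j) -(odd_double_half j') eq_odd eq_half.
Qed.

Lemma prod_mul_tangent_sum_le1 (F : realFieldType) n (x : 'I_n -> F) :
  (forall i, 0 < x i <= 1) -> \prod_i x i * (1 + \sum_i (1 - x i) / x i) <= 1.
Proof.
elim: n x => [|n IHn] x x01; first by rewrite !big_ord0 addr0 mulr1.
rewrite !big_ord_recr /=.
set P := \prod_(i < n) _; set S := \sum_(i < n) _; set y := x ord_max.
have IH : P * (1 + S) <= 1 by apply: IHn => i; apply: x01.
have x_ge0_le1 i : 0 <= x i <= 1 by have /andP[/ltW-> ->] := x01 i.
have P_ge0 : 0 <= P.
  by apply: prodr_ge0 => i _; case/andP: (x_ge0_le1 (widen_ord (leqnSn n) i)).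
have P_le1 : P <= 1 by apply: prodr_ile1 => i _; apply: x_ge0_le1.
have /andP[y_gt0 y_le1] := x01 ord_max.
have -> : P * y * (1 + (S + (1 - y) / y)) = y * (P * (1 + S)) + P * (1 - y).
  by field; rewrite gt_eqF.
have : y * (P * (1 + S)) <= y by rewrite ler_piMr // ltW.
have : P * (1 - y) <= 1 - y by rewrite ler_piMl // subr_ge0.
lra.
Qed.

Lemma prod_le_inv_sqr (F : realFieldType) n (x : 'I_n -> F) (b : F) :
  (forall i, 0 < x i <= 1) -> 0 < b -> b ^+ 2 <= \sum_i (1 - x i) / x i ->
  \prod_i x i <= b^-1 ^+ 2.
Proof.
move=> x01 b_gt0 b2_le_S.
have := prod_mul_tangent_sum_le1 x01.
set P := \prod_i _; set S := \sum_i _ => PS_le1.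
have P_ge0 : 0 <= P by apply: prodr_ge0 => i _; have /andP[/ltW] := x01 i.
rewrite exprVn -div1r ler_pdivlMr ?exprn_gt0 //.
have := ler_wpM2l P_ge0 b2_le_S; rewrite -/S; lra.
Qed.

Lemma sum_mul_le_card_sum_sqr (F : numFieldType) n (x : 'I_n -> F) :
  (forall k, x k \is Num.real) -> \sum_k \sum_l x k * x l <= n%:R * \sum_k x k ^+ 2.
Proof.
move=> x_real.
apply: (@le_trans _ _ (\sum_k \sum_l (x k ^+ 2 + x l ^+ 2) / 2)).
  by do 2![apply: ler_sum => ? _]; apply: real_leif_mean_square.
under eq_bigr do rewrite -mulr_suml big_split /= sumr_const card_ord.
rewrite -mulr_suml big_split /= sumr_const card_ord sumrMnl.
by rewrite -mulr2n -[_ *+ 2]mulr_natr mulfK ?pnatr_eq0 // mulr_natl.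
Qed.

Section HermitianProduct.
Variable R : rcfType.
Local Open Scope sesquilinear_scope.
Local Notation C := R[i].
Implicit Types (N : nat).

Lemma cinner_dotmx N (u v : 'cV[C]_N) : cinner u v = dotmx v^T u^T.
Proof. by rewrite dotmxE mxE; apply: eq_bigr => k _; rewrite !mxE mulrC. Qed.

Lemma cinner_ge0 N (u : 'cV[C]_N) : 0 <= cinner u u.
Proof. by rewrite cinner_dotmx dnorm_ge0. Qed.

Lemma cinner_CauchySchwarz N (u v : 'cV[C]_N) :
  `|cinner u v| ^+ 2 <= cinner u u * cinner v v.
Proof. by rewrite !cinner_dotmx mulrC (CauchySchwarz (@dotmx C N)). Qed.

Lemma cinnerC N (u v : 'cV[C]_N) : cinner v u = (cinner u v)^*.
Proof.
rewrite /cinner rmorph_sum; apply: eq_bigr => k _.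
by rewrite rmorphM /= conjCK mulrC.
Qed.

Lemma cinner_sumr N p (u : 'cV[C]_N) (a : 'I_p -> C) (v : 'I_p -> 'cV[C]_N) :
  cinner u (\sum_k a k *: v k) = \sum_k a k * cinner u (v k).
Proof.
rewrite /cinner; under eq_bigr do rewrite summxE mulr_sumr.
rewrite exchange_big /=; apply: eq_bigr => k _.
by rewrite mulr_sumr; apply: eq_bigr => i _; rewrite mxE mulrCA.
Qed.

Lemma cinner_suml N p (u : 'cV[C]_N) (a : 'I_p -> C) (v : 'I_p -> 'cV[C]_N) :
  cinner (\sum_k a k *: v k) u = \sum_k (a k)^* * cinner (v k) u.
Proof.
rewrite cinnerC cinner_sumr rmorph_sum; apply: eq_bigr => k _.
by rewrite rmorphM /= -cinnerC.
Qed.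

Lemma cinner_lincomb_le N n (v : 'I_n -> 'cV[C]_N) (a : 'I_n -> C) (c : C) :
  0 <= c -> (forall k, unit_vector (v k)) ->
  (forall k l, k != l -> `|cinner (v k) (v l)| <= c) ->
  cinner (\sum_k a k *: v k) (\sum_k a k *: v k) <=
    (1 + n%:R * c) * \sum_k `|a k| ^+ 2.
Proof.
move=> c_ge0 v_unit v_coh; set w := \sum_k _.
have overlap_le k l : `|cinner (v k) (v l)| <= (k == l)%:R + c.
  have [<-|/v_coh] := eqVneq k l; last by rewrite add0r.
  by rewrite v_unit normr1 lerDl.
rewrite -[cinner w w]ger0_norm ?cinner_ge0 // {1}/w cinner_suml.
under eq_bigr do rewrite cinner_sumr.
apply: (le_trans (ler_norm_sum _ _ _)).
apply: (@le_trans _ _ (\sum_k \sum_l `|a k| * `|a l| * ((k == l)%:R + c))).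
  apply: ler_sum => k _; rewrite normrM norm_conjC.
  apply: (le_trans (ler_wpM2l (normr_ge0 _) (ler_norm_sum _ _ _))).
  rewrite mulr_sumr; apply: ler_sum => l _.
  by rewrite normrM mulrA ler_wpM2l ?mulr_ge0.
have diag k : \sum_l `|a k| * `|a l| * (k == l)%:R = `|a k| ^+ 2.
  rewrite (bigD1 k) //= eqxx mulr1 big1 ?addr0 ?expr2 // => l.
  by rewrite eq_sym => /negbTE->; rewrite mulr0.
under eq_bigr do (under eq_bigr do rewrite mulrDr; rewrite big_split /= diag).
rewrite big_split /= mulrDl mul1r lerD2l.
under eq_bigr do rewrite -mulr_suml.
rewrite -mulr_suml [leRHS]mulrAC ler_wpM2r //.
by apply: sum_mul_le_card_sum_sqr => k; apply: normr_real.
Qed.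

Lemma sum_sqr_cinner_le N n (v : 'I_n -> 'cV[C]_N) (u : 'cV[C]_N) (c : C) :
  0 <= c -> (forall k, unit_vector (v k)) ->
  (forall k l, k != l -> `|cinner (v k) (v l)| <= c) -> unit_vector u ->
  \sum_k `|cinner (v k) u| ^+ 2 <= 1 + n%:R * c.
Proof.
move=> c_ge0 v_unit v_coh u_unit; set T := \sum_k _.
have T_ge0 : 0 <= T by apply: sumr_ge0 => k _; apply: exprn_ge0.
pose w := \sum_k cinner (v k) u *: v k.
have wuE : cinner w u = T.
  by rewrite cinner_suml; apply: eq_bigr => k _; rewrite normCKC.
have : T ^+ 2 <= (1 + n%:R * c) * T.
  rewrite -{1}(ger0_norm T_ge0) -{1}wuE.
  apply: (le_trans (cinner_CauchySchwarz _ _)).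
  by rewrite u_unit mulr1; apply: cinner_lincomb_le.
have [-> _|T_neq0] := eqVneq T 0; first by rewrite addr_ge0 ?mulr_ge0.
by rewrite expr2 ler_pM2r // lt_def T_neq0.
Qed.

Lemma adjmxE N p (A : 'M[C]_(N, p)) : adjmx A = A ^t*.
Proof. by apply/matrixP => i j; rewrite !mxE. Qed.

Lemma cinner_adjmx N p (A : 'M[C]_(p, N)) (x : 'cV[C]_N) (y : 'cV[C]_p) :
  cinner x (adjmx A *m y) = cinner (A *m x) y.
Proof.
rewrite /cinner; under eq_bigr do rewrite mxE mulr_sumr.
rewrite exchange_big /=; apply: eq_bigr => j _.
rewrite mxE rmorph_sum mulr_suml; apply: eq_bigr => i _.
by rewrite !mxE rmorphM mulrCA mulrA mulrC.
Qed.

Lemma density_matrix_spectral N (rho : 'M[C]_N) : density_matrix rho ->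
  exists (d : 'I_N -> C) (u : 'I_N -> 'cV[C]_N),
  [/\ forall j, 0 <= d j, \sum_j d j = 1, forall j, unit_vector (u j) &
      forall x, expect rho x = \sum_j d j * `|cinner (u j) x| ^+ 2].
Proof.
case=> rho_herm rho_psd rho_tr.
have rho_normal : rho \is normalmx by apply/normalmxP; rewrite -adjmxE rho_herm.
have := orthomx_spectralP rho_normal.
set P := spectralmx rho; set d := spectral_diag rho.
rewrite invmx_unitary ?spectral_unitarymx // -adjmxE => rhoE.
have PPt : P *m adjmx P = 1%:M by rewrite adjmxE; apply/unitarymxP/spectral_unitarymx.
pose u j := col j (adjmx P).
have u_ortho i j : cinner (u i) (u j) = (i == j)%:R.
  have := congr1 (fun M : 'M_N => M i j) PPt; rewrite !mxE => <-.
  by apply: eq_bigr => k _; rewrite !mxE conjcK.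
have Px j x : (P *m x) j 0 = cinner (u j) x.
  by rewrite mxE /cinner; apply: eq_bigr => k _; rewrite !mxE conjcK.
have expectE x : expect rho x = \sum_j d 0 j * `|cinner (u j) x| ^+ 2.
  rewrite /expect rhoE -!mulmxA cinner_adjmx {1}/cinner; apply: eq_bigr => j _.
  by rewrite mul_diag_mx [X in _ * X]mxE Px normCKC mulrCA.
have d_ge0 j : 0 <= d 0 j.
  have := rho_psd (u j); rewrite -/(expect rho _) expectE (bigD1 j) //= big1.
    by rewrite u_ortho eqxx normr1 expr1n mulr1 addr0.
  by move=> i /negbTE i_neq_j; rewrite u_ortho i_neq_j normr0 expr0n mulr0.
exists (d 0), u; split=> // [|j]; last by rewrite /unit_vector u_ortho eqxx.
by rewrite -rho_tr rhoE mxtrace_mulC mulmxA PPt mul1mx mxtrace_diag.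
Qed.

Lemma sum_expect_le N (rho : 'M[C]_N) n (v : 'I_n -> 'cV[C]_N) (c : C) :
  density_matrix rho -> 0 <= c -> (forall k, unit_vector (v k)) ->
  (forall k l, k != l -> `|cinner (v k) (v l)| <= c) ->
  \sum_k expect rho (v k) <= 1 + n%:R * c.
Proof.
move=> /density_matrix_spectral[d [u [d_ge0 d_sum u_unit expectE]]].
move=> c_ge0 v_unit v_coh.
under eq_bigr do rewrite expectE.
rewrite exchange_big /= -[leRHS]mul1r -{1}d_sum mulr_suml; apply: ler_sum => j _.
rewrite -mulr_sumr ler_wpM2l //.
under eq_bigr do rewrite cinnerC norm_conjC.
exact: sum_sqr_cinner_le.
Qed.

End HermitianProduct.

Section ProductStates.
Variable R : rcfType.
Local Open Scope complex_scope.
Local Notation C := R[i].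

Definition qbits m (j : 'I_(2 ^ m)) : {ffun 'I_m -> 'I_2} := [ffun i => qbit j i].

Lemma qbits_bij m : bijective (@qbits m).
Proof.
apply: inj_card_bij; last by rewrite card_ffun !card_ord.
move=> j j' /ffunP eq_bits; apply/val_inj/(@odd_divn_exp2_inj m); try exact: ltn_ord.
move=> i lt_im; have := eq_bits (Ordinal lt_im); rewrite !ffunE /qbit.
move/(congr1 val); rewrite /= !inordK ?ltnS ?leq_b1 //.
by do 2 case: odd.
Qed.

Lemma cinner_prod_state m (p q : prod_factors R m) :
  cinner (prod_state p) (prod_state q) = \prod_i cinner (p i) (q i).
Proof.
rewrite /cinner bigA_distr_bigA /= (reindex _ (onW_bij _ (qbits_bij m))).
apply: eq_bigr => j _; rewrite !mxE rmorph_prod -big_split /=.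
by apply: eq_bigr => i _; rewrite ffunE.
Qed.

Lemma csqnormE (z : C) : (csqnorm z)%:C = `|z| ^+ 2.
Proof. by rewrite /csqnorm add_Re2_Im2. Qed.

Lemma norm_cinner_prod_state_le m (p q : prod_factors R m) (b : R) :
  0 < b -> (forall i, unit_vector (p i)) -> (forall i, unit_vector (q i)) ->
  (b%:E <= dtan p q)%E -> `|cinner (prod_state p) (prod_state q)| <= (b^-1)%:C.
Proof.
move=> b_gt0 p_unit q_unit; rewrite cinner_prod_state /dtan.
have b_inv_ge0 : 0 <= (b^-1)%:C by rewrite ler0c invr_ge0 ltW.
case: ifPn => [/existsP[i /eqP pqi0] _|/existsPn overlap_neq0].
  by rewrite (bigD1 i) //= pqi0 mul0r normr0.
pose x i := csqnorm (cinner (p i) (q i)); rewrite lee_fin => b_le_sqrtS.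
have x01 i : 0 < x i <= 1.
  rewrite -ltcR -lecR csqnormE exprn_gt0 ?normr_gt0 ?overlap_neq0 //=.
  by have := cinner_CauchySchwarz (p i) (q i); rewrite p_unit q_unit mulr1.
have b2_le_S : b ^+ 2 <= \sum_i (1 - x i) / x i.
  have {}b_le_sqrtS : b <= Num.sqrt (\sum_i (1 - x i) / x i) := b_le_sqrtS.
  have S_ge0 : 0 <= \sum_i (1 - x i) / x i.
    apply: sumr_ge0 => i _; have /andP[/ltW x_ge0 x_le1] := x01 i.
    by rewrite divr_ge0 ?subr_ge0.
  by rewrite -ler_sqrt // sqrtr_sqr ger0_norm // ltW.
rewrite -(ler_pXn2r (n := 2)) ?nnegrE // normr_prod -prodrXl.
under eq_bigr do rewrite -csqnormE.
by rewrite -rmorph_prod -rmorphXn lecR prod_le_inv_sqr.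
Qed.

End ProductStates.

Theorem claim5p3 (R : rcfType) (m : nat) (rho : 'M[R[i]]_(2 ^ m))
  (eta eps b : R) (n : nat) (P : 'I_n -> prod_factors R m) :
  density_matrix rho ->
  0 < b ->
  0 < eta - eps - b^-1 ->
  (forall k i, unit_vector (P k i)) ->
  (forall k, ((eta - eps)%:C)%C <= expect rho (prod_state (P k))) ->
  (forall k l, k != l -> (b%:E <= dtan (P k) (P l))%E) ->
  n%:R <= (eta - eps - b^-1)^-1.
Proof.
move=> rho_density b_gt0 gap_gt0 P_unit P_expect P_dtan.
have state_unit k : unit_vector (prod_state (P k)).
  by rewrite /unit_vector cinner_prod_state big1 // => i _; apply: P_unit.
have overlap_le k l : k != l ->
    `|cinner (prod_state (P k)) (prod_state (P l))| <= (b^-1)%:C%C.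
  by move=> /P_dtan; apply: norm_cinner_prod_state_le.
have b_inv_ge0 : 0 <= (b^-1)%:C%C by rewrite ler0c invr_ge0 ltW.
have := sum_expect_le rho_density b_inv_ge0 state_unit overlap_le.
move/(le_trans (ler_sum _ (fun k _ => P_expect k))); rewrite sumr_const card_ord.
have -> : ((eta - eps)%:C *+ n = ((eta - eps) *+ n)%:C)%C by rewrite rmorphMn.
have -> : (1 + n%:R * (b^-1)%:C = (1 + n%:R * b^-1)%:C)%C.
  by rewrite rmorphD rmorphM rmorph_nat.
rewrite lecR -mulr_natl => n_gap_le1.
by rewrite -div1r ler_pdivlMr //; lra.
Qed.
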